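(* Let $T$ be an ideal hyperbolic triangle in $\mathbb{H}^{2}$, and let $p,q,r$ be the points where the inscribed circle of $T$ touches the sides of $T$. If $h_{0}$ is the length of the greatest horocyclic arc contained in $T$ centered at an ideal vertex of $T$, and $l_{0}$ is the hyperbolic distance between $p$ and $q$, then $l_{0}<h_{0}$. *)

From Stdlib Require Import Reals Lra.
From Coquelicot Require Import Coquelicot.
Open Scope R_scope.

(* A point of the plane; H^2 = { (x,y) | y > 0 } with metric |dz|/y. *)
Definition pt := (R * R)%type.
Definition inH (z : pt) : Prop := 0 < snd z.

Definition arcosh (t : R) : R := ln (t + sqrt (t ^ 2 - 1)).

Definition hdist (z w : pt) : R :=
  arcosh (1 + ((fst z - fst w) ^ 2 + (snd z - snd w) ^ 2) / (2 * snd z * snd w)).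

(* ideal points: boundary R \cup {oo}; None = oo *)
Definition ideal := option R.

(* defining function of the geodesic joining ideal points u, v:
   semicircle centred on the real axis, or vertical line *)
Definition gfun (u v : ideal) (z : pt) : R :=
  match u, v with
  | Some x, Some y => (fst z - (x + y) / 2) ^ 2 + snd z ^ 2 - ((x - y) / 2) ^ 2
  | Some x, None | None, Some x => fst z - x
  | None, None => 0
  end.

(* sign of the geodesic's defining function at a third ideal point w *)
Definition gval (u v w : ideal) : R :=
  match u, v, w with
  | Some x, Some y, Some t => (t - (x + y) / 2) ^ 2 - ((x - y) / 2) ^ 2
  | Some _, Some _, None => 1
  | Some x, None, Some t | None, Some x, Some t => t - x
  | _, _, _ => 0
  end.

Definition geodesic (u v : ideal) (z : pt) : Prop := inH z /\ gfun u v z = 0.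

Definition halfplane (u v w : ideal) (z : pt) : Prop :=
  inH z /\ 0 <= gfun u v z * gval u v w.

Definition ideal_triangle (a b c : ideal) : Prop := a <> b /\ b <> c /\ a <> c.

Definition triangle (a b c : ideal) (z : pt) : Prop :=
  halfplane b c a z /\ halfplane c a b z /\ halfplane a b c z.

Definition hcircle (o : pt) (rho : R) (z : pt) : Prop := inH z /\ hdist o z = rho.

(* the circle (o, rho) is inscribed in T: contained in T; it touches the side
   geodesic(u,v) at p  iff  p lies on both (a circle inside T meeting a side
   is tangent to it there) *)
Definition inscribed (a b c : ideal) (o : pt) (rho : R) : Prop :=
  inH o /\ 0 < rho /\ (forall z, hcircle o rho z -> triangle a b c z).

Definition touches (o : pt) (rho : R) (u v : ideal) (p : pt) : Prop :=
  hcircle o rho p /\ geodesic u v p.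

(* parametrisation of the horocycle centred at the ideal point v with size s>0:
   centre oo : horizontal line y = s;
   centre a  : Euclidean circle of diameter s tangent to R at a,
               t |-> a + s/(t - i). *)
Definition horo (v : ideal) (s t : R) : pt :=
  match v with
  | None => (t, s)
  | Some a => (a + s * t / (1 + t ^ 2), s / (1 + t ^ 2))
  end.

Definition hspeed (g : R -> pt) (t : R) : R :=
  sqrt ((Derive (fun u => fst (g u)) t) ^ 2 + (Derive (fun u => snd (g u)) t) ^ 2)
  / snd (g t).
Definition hlength (g : R -> pt) (t1 t2 : R) : R := RInt (hspeed g) t1 t2.

Definition horo_arc_in (a b c v : ideal) (s t1 t2 : R) : Prop :=
  (v = a \/ v = b \/ v = c) /\ 0 < s /\ t1 <= t2 /\
  (forall t, t1 <= t <= t2 -> triangle a b c (horo v s t)).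

From Stdlib Require Import Reals Lra.
From Coquelicot Require Import Coquelicot.
Open Scope R_scope.

(* Put the triangle in the position (a, b, oo) with a < b.  A
   hyperbolic circle inside it is a Euclidean circle of centre (x0, Y) and radius
   R lying between the lines x = a, x = b and above the semicircle over [a, b];
   this forces 2 R <= Y, i.e. 4 (cosh^2 rho - 1) <= cosh^2 rho.  Two points of
   such a circle have heights >= Y/2 and Euclidean distance <= 2 R <= Y, so
   cosh d(p, q) <= 3 and d(p, q) <= arcosh 3 < 2.  On the other hand the
   horocycle y = (b - a)/2 crosses the triangle along an arc of hyperbolic length
   (b - a) / ((b - a)/2) = 2, so h0 >= 2.  A general ideal triangle is brought to
   this position by permuting its vertices or by the isometry z |-> c - 1/z. *)

Definition cosh_hdist (z w : pt) : R :=
  1 + ((fst z - fst w) ^ 2 + (snd z - snd w) ^ 2) / (2 * snd z * snd w).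

Lemma hdist_cosh z w : hdist z w = arcosh (cosh_hdist z w).
Proof. reflexivity. Qed.

Lemma cosh_hdist_ge1 z w : inH z -> inH w -> 1 <= cosh_hdist z w.
Proof.
  unfold inH, cosh_hdist; intros Hz Hw.
  assert (0 <= ((fst z - fst w) ^ 2 + (snd z - snd w) ^ 2) / (2 * snd z * snd w)).
  { apply Rdiv_le_0_compat; [| apply Rmult_lt_0_compat; lra].
    pose proof (pow2_ge_0 (fst z - fst w)); pose proof (pow2_ge_0 (snd z - snd w)); lra. }
  lra.
Qed.

Lemma arcosh_lt s t : 1 <= s -> s < t -> arcosh s < arcosh t.
Proof.
  intros Hs Hst; unfold arcosh; apply ln_increasing.
  - pose proof (sqrt_pos (s ^ 2 - 1)); lra.
  - assert (sqrt (s ^ 2 - 1) <= sqrt (t ^ 2 - 1)) by (apply sqrt_le_1_alt; nra).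
    lra.
Qed.

Lemma arcosh_le s t : 1 <= s -> s <= t -> arcosh s <= arcosh t.
Proof.
  intros Hs [Hst | ->]; [left; apply arcosh_lt | right]; auto.
Qed.

Lemma arcosh_inj s t : 1 <= s -> 1 <= t -> arcosh s = arcosh t -> s = t.
Proof.
  intros Hs Ht E; destruct (Rtotal_order s t) as [H | [H | H]]; auto.
  - pose proof (arcosh_lt s t Hs H); lra.
  - pose proof (arcosh_lt t s Ht H); lra.
Qed.

Lemma arcosh_3_lt_2 : arcosh 3 < 2.
Proof.
  unfold arcosh; rewrite <- (ln_exp 2); apply ln_increasing.
  - pose proof (sqrt_pos (3 ^ 2 - 1)); lra.
  - assert (Hsqrt : sqrt (3 ^ 2 - 1) < 2.83).
    { rewrite <- (sqrt_pow2 2.83) by lra; apply sqrt_lt_1_alt; lra. }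
    (* e^2 = (e^(1/4))^8 > (5/4)^8 > 5.9 *)
    assert (Hquarter : 1 + / 4 < exp (/ 4)) by (apply exp_ineq1; lra).
    assert (Hdouble : forall x, exp (2 * x) = exp x ^ 2).
    { intros x; replace (2 * x) with (x + x) by ring; rewrite exp_plus; ring. }
    assert (E : exp 2 = exp (/ 4) ^ 8).
    { replace (exp (/ 4) ^ 8) with (((exp (/ 4) ^ 2) ^ 2) ^ 2) by ring.
      rewrite <- !Hdouble; f_equal; field. }
    assert ((5 / 4) ^ 8 <= exp (/ 4) ^ 8) by (apply pow_incr; lra).
    lra.
Qed.

Lemma cosh_hdist_euclid o z C : inH o -> inH z ->
  cosh_hdist o z = C <->
  (fst z - fst o) ^ 2 + (snd z - C * snd o) ^ 2 = (C ^ 2 - 1) * snd o ^ 2.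
Proof.
  unfold inH, cosh_hdist; intros Ho Hz; split; intros H.
  - assert (E : (fst o - fst z) ^ 2 + (snd o - snd z) ^ 2
                = (C - 1) * (2 * snd o * snd z)) by (rewrite <- H; field; lra).
    nra.
  - assert (E : (fst o - fst z) ^ 2 + (snd o - snd z) ^ 2
                = (C - 1) * (2 * snd o * snd z)) by nra.
    rewrite E; field; lra.
Qed.

Lemma Rmult_nonneg_iff_pos_r x k : 0 < k -> 0 <= x * k <-> 0 <= x.
Proof. intros Hk; split; intros H; [destruct (Rle_or_lt 0 x) |]; nra. Qed.

Lemma triangle_swap a b c z : triangle a b c z <-> triangle b a c z.
Proof.
  assert (Hsym : forall u v w, halfplane u v w z <-> halfplane v u w z).
  { intros u v w; unfold halfplane.
    replace (gfun v u z) with (gfun u v z)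
      by (destruct u, v; unfold gfun; try reflexivity; field).
    replace (gval v u w) with (gval u v w)
      by (destruct u, v, w; unfold gval; try reflexivity; field).
    reflexivity. }
  unfold triangle; rewrite (Hsym b c), (Hsym c a), (Hsym a b); tauto.
Qed.

Lemma triangle_rot a b c z : triangle a b c z <-> triangle b c a z.
Proof. unfold triangle; tauto. Qed.

Lemma triangle_std a b z : a < b ->
  triangle (Some a) (Some b) None z <->
  inH z /\ a <= fst z <= b /\ ((b - a) / 2) ^ 2 <= (fst z - (a + b) / 2) ^ 2 + snd z ^ 2.
Proof.
  intros Hab; unfold triangle, halfplane, gfun, gval.
  replace ((fst z - b) * (a - b)) with ((b - fst z) * (b - a)) by ring.
  rewrite !Rmult_nonneg_iff_pos_r by lra.
  replace (((a - b) / 2) ^ 2) with (((b - a) / 2) ^ 2) by field.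
  intuition lra.
Qed.

(* [mobius c] is the isometry z |-> c - 1/z, sending oo to c; [mobius_inv c] is
   its inverse z |-> 1/(c - z). *)
Definition mobius (c : R) (w : pt) : pt :=
  (c - fst w / (fst w ^ 2 + snd w ^ 2), snd w / (fst w ^ 2 + snd w ^ 2)).
Definition mobius_inv (c : R) (z : pt) : pt :=
  ((c - fst z) / ((fst z - c) ^ 2 + snd z ^ 2), snd z / ((fst z - c) ^ 2 + snd z ^ 2)).

Lemma norm2_pos x y : 0 < y -> 0 < x ^ 2 + y ^ 2.
Proof. intros Hy; pose proof (pow2_ge_0 x); pose proof (pow_lt y 2 Hy); lra. Qed.

Lemma mobius_inH c w : inH w -> inH (mobius c w).
Proof. unfold inH, mobius; simpl; intros H; apply Rdiv_lt_0_compat, norm2_pos; auto. Qed.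

Lemma mobius_inv_inH c z : inH z -> inH (mobius_inv c z).
Proof. unfold inH, mobius_inv; simpl; intros H; apply Rdiv_lt_0_compat, norm2_pos; auto. Qed.

Lemma mobius_invK c z : inH z -> mobius c (mobius_inv c z) = z.
Proof.
  destruct z as [x y]; unfold inH, mobius, mobius_inv; simpl; intros Hy.
  pose proof (norm2_pos (x - c) y Hy).
  f_equal; field; lra.
Qed.

Lemma cosh_hdist_mobius c w1 w2 : inH w1 -> inH w2 ->
  cosh_hdist (mobius c w1) (mobius c w2) = cosh_hdist w1 w2.
Proof.
  destruct w1 as [x1 y1], w2 as [x2 y2]; unfold inH, cosh_hdist, mobius; simpl.
  intros H1 H2; pose proof (norm2_pos x1 y1 H1); pose proof (norm2_pos x2 y2 H2).
  field; repeat split; lra.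
Qed.

Lemma halfplane_scale u v w u' v' w' z z' k : 0 < k -> (inH z <-> inH z') ->
  gfun u v z * gval u v w = k * (gfun u' v' z' * gval u' v' w') ->
  halfplane u v w z <-> halfplane u' v' w' z'.
Proof.
  unfold halfplane; intros Hk Hin E; rewrite E, Rmult_comm, Rmult_nonneg_iff_pos_r by exact Hk.
  tauto.
Qed.

Lemma triangle_mobius c a b w : a <> 0 -> b <> 0 -> inH w ->
  triangle (Some a) (Some b) None w <->
  triangle (Some (c - / a)) (Some (c - / b)) (Some c) (mobius c w).
Proof.
  destruct w as [x y]; unfold inH; simpl; intros Ha Hb Hy.
  pose proof (norm2_pos x y Hy).
  set (k := (a * b) ^ 2 * (x ^ 2 + y ^ 2)).
  assert (Hk : 0 < k)
    by (apply Rmult_lt_0_compat; [apply pow2_gt_0, Rmult_integral_contrapositive |]; auto).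
  assert (Hin : inH (x, y) <-> inH (mobius c (x, y)))
    by (split; [apply mobius_inH | intros _; exact Hy]).
  assert (Hscale : forall u v w u' v' w',
    gfun u v (x, y) * gval u v w = k * (gfun u' v' (mobius c (x, y)) * gval u' v' w') ->
    halfplane u v w (x, y) <-> halfplane u' v' w' (mobius c (x, y)))
    by (intros; apply halfplane_scale with k; assumption).
  unfold triangle.
  rewrite (Hscale (Some b) None (Some a) (Some (c - / b)) (Some c) (Some (c - / a))),
    (Hscale None (Some a) (Some b) (Some c) (Some (c - / a)) (Some (c - / b))),
    (Hscale (Some a) (Some b) None (Some (c - / a)) (Some (c - / b)) (Some c)).
  - reflexivity.
  all: unfold k, gfun, gval, mobius; cbn [fst snd]; field; repeat split; auto; lra.
Qed.

Lemma finite_vertices_mobius a b c : a < b < c ->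
  exists a' b', 0 < a' < b' /\ a = c - / a' /\ b = c - / b'.
Proof.
  intros Habc; exists (/ (c - a)), (/ (c - b)).
  rewrite !Rinv_inv; repeat split; try ring.
  - apply Rinv_0_lt_compat; lra.
  - apply Rinv_lt_contravar; nra.
Qed.

Lemma ideal_triangle_wlog (P : ideal -> ideal -> ideal -> Prop) :
  (forall a b c, P a b c -> P b a c) ->
  (forall a b c, P a b c -> P b c a) ->
  (forall a b, a < b -> P (Some a) (Some b) None) ->
  (forall a b c, a < b < c -> P (Some a) (Some b) (Some c)) ->
  forall a b c, ideal_triangle a b c -> P a b c.
Proof.
  intros Pswap Prot Poo Pfin.
  assert (Poo_ne : forall a b, a <> b -> P (Some a) (Some b) None).
  { intros a b Hab; destruct (Rtotal_order a b) as [H | [H | H]];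
      [auto | contradiction | apply Pswap; auto]. }
  assert (Pfin_lt : forall a b c, a < b -> b <> c -> a <> c -> P (Some a) (Some b) (Some c)).
  { intros a b c Hab Hbc Hac.
    destruct (Rtotal_order b c) as [H | [H | H]]; [apply Pfin; lra | contradiction |].
    destruct (Rtotal_order a c) as [H' | [H' | H']]; [| contradiction |].
    - apply Prot, Pswap, Pfin; lra.
    - apply Prot, Pfin; lra. }
  intros [a|] [b|] [c|] (Hab & Hbc & Hac); try congruence.
  - assert (a <> b) by congruence; assert (b <> c) by congruence; assert (a <> c) by congruence.
    destruct (Rtotal_order a b) as [Hlt | [Heq | Hgt]]; [auto | contradiction |].
    apply Pswap, Pfin_lt; auto.
  - apply Poo_ne; congruence.
  - apply Prot, Poo_ne; congruence.
  - apply Prot, Prot, Poo_ne; congruence.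
Qed.

Lemma hspeed_horo_oo s t : 0 < s -> hspeed (horo None s) t = / s.
Proof.
  intros Hs; unfold hspeed, horo; cbn [fst snd].
  change (Derive (fun u => u) t) with (Derive id t).
  rewrite Derive_id, Derive_const.
  replace (1 ^ 2 + 0 ^ 2) with 1 by ring; rewrite sqrt_1.
  field; lra.
Qed.

Lemma hspeed_horo_finite a s t : 0 < s -> hspeed (horo (Some a) s) t = 1.
Proof.
  intros Hs; unfold hspeed, horo; cbn [fst snd].
  assert (Ht : 0 < 1 + t ^ 2) by (pose proof (pow2_ge_0 t); lra).
  assert (Dx : Derive (fun u => a + s * u / (1 + u ^ 2)) t = s * (1 - t ^ 2) / (1 + t ^ 2) ^ 2)
    by (apply is_derive_unique; auto_derive; [lra | field; lra]).
  assert (Dy : Derive (fun u => s / (1 + u ^ 2)) t = - (2 * s * t) / (1 + t ^ 2) ^ 2)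
    by (apply is_derive_unique; auto_derive; [lra | field; lra]).
  rewrite Dx, Dy.
  replace ((s * (1 - t ^ 2) / (1 + t ^ 2) ^ 2) ^ 2 + (- (2 * s * t) / (1 + t ^ 2) ^ 2) ^ 2)
    with ((s / (1 + t ^ 2)) ^ 2) by (field; lra).
  rewrite sqrt_pow2 by (apply Rlt_le, Rdiv_lt_0_compat; lra).
  field; lra.
Qed.

Lemma hlength_horo_oo s t1 t2 : 0 < s -> hlength (horo None s) t1 t2 = (t2 - t1) / s.
Proof.
  intros Hs; unfold hlength.
  rewrite (RInt_ext _ (fun _ => / s)) by (intros; apply hspeed_horo_oo, Hs).
  rewrite RInt_const; unfold scal; simpl; unfold mult; simpl; field; lra.
Qed.

Lemma hlength_horo_finite a s t1 t2 : 0 < s -> hlength (horo (Some a) s) t1 t2 = t2 - t1.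
Proof.
  intros Hs; unfold hlength.
  rewrite (RInt_ext _ (fun _ => 1)) by (intros; apply hspeed_horo_finite, Hs).
  rewrite RInt_const; unfold scal; simpl; unfold mult; simpl; ring.
Qed.

Lemma horo_mobius c s u : 0 < s ->
  horo (Some c) (/ s) u = mobius c (horo None s (- s * u)).
Proof.
  intros Hs; unfold horo, mobius; cbn [fst snd].
  assert (0 < 1 + u ^ 2) by (pose proof (pow2_ge_0 u); lra).
  pose proof (norm2_pos (- s * u) s Hs).
  f_equal; field; repeat split; lra.
Qed.

Lemma disc_in_strip_above_semicircle a b x0 Y R :
  0 <= R -> R < Y -> a <= x0 - R -> x0 + R <= b ->
  ((b - a) / 2) ^ 2 <= (x0 - (a + b) / 2) ^ 2 + (Y - R) ^ 2 -> 2 * R <= Y.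
Proof.
  intros HR HRY Ha Hb Hbottom.
  set (h := (b - a) / 2) in *; set (u := x0 - (a + b) / 2) in *.
  assert (Hu : u ^ 2 <= (h - R) ^ 2) by (unfold u, h in *; nra).
  (* otherwise h^2 <= u^2 + (Y - R)^2 < (h - R)^2 + R^2 <= h^2 *)
  destruct (Rle_or_lt (2 * R) Y) as [| Hlt]; [assumption | exfalso].
  assert ((Y - R) ^ 2 < R ^ 2) by nra.
  assert (0 <= R * (h - R)) by (apply Rmult_le_pos; unfold h; lra).
  nra.
Qed.

Definition circle_in (a b c : ideal) (o : pt) (C : R) : Prop :=
  forall z, inH z -> cosh_hdist o z = C -> triangle a b c z.

Lemma circle_in_sub a b c a' b' c' o C :
  (forall z, triangle a b c z -> triangle a' b' c' z) ->
  circle_in a b c o C -> circle_in a' b' c' o C.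
Proof. intros Hsub Hin z Hz HzC; apply Hsub, Hin; assumption. Qed.

Lemma incircle_bound_std a b o C : a < b -> inH o -> 1 <= C ->
  circle_in (Some a) (Some b) None o C -> 4 * (C ^ 2 - 1) <= C ^ 2.
Proof.
  intros Hab Ho HC Hin; destruct o as [x0 y0]; unfold inH in Ho; simpl in Ho.
  (* the circle is the Euclidean circle of centre (x0, Y) and radius R *)
  set (Y := C * y0); set (R := y0 * sqrt (C ^ 2 - 1)).
  assert (HC2 : 0 <= C ^ 2 - 1) by nra.
  assert (HR2 : R ^ 2 = (C ^ 2 - 1) * y0 ^ 2)
    by (unfold R; rewrite Rpow_mult_distr, pow2_sqrt; [ring | exact HC2]).
  assert (HR : 0 <= R) by (unfold R; apply Rmult_le_pos; [lra | apply sqrt_pos]).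
  assert (HY : 0 < Y) by (unfold Y; nra).
  assert (HRY : R < Y).
  { destruct (Rlt_or_le R Y) as [| Hle]; [assumption |].
    assert (Y ^ 2 <= R ^ 2) by nra. unfold Y in *; nra. }
  assert (Hon : forall x y, 0 < y -> (x - x0) ^ 2 + (y - Y) ^ 2 = R ^ 2 ->
                  triangle (Some a) (Some b) None (x, y)).
  { intros x y Hy E; apply Hin; [exact Hy |].
    apply cosh_hdist_euclid; [exact Ho | exact Hy |]; cbn [fst snd]; rewrite <- HR2; exact E. }
  destruct (proj1 (triangle_std a b _ Hab) (Hon (x0 - R) Y ltac:(lra) ltac:(ring)))
    as [_ [[Hleft _] _]].
  destruct (proj1 (triangle_std a b _ Hab) (Hon (x0 + R) Y ltac:(lra) ltac:(ring)))
    as [_ [[_ Hright] _]].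
  destruct (proj1 (triangle_std a b _ Hab) (Hon x0 (Y - R) ltac:(lra) ltac:(ring)))
    as [_ [_ Hbottom]].
  simpl in Hleft, Hright, Hbottom.
  assert (H2R : 2 * R <= Y)
    by (apply (disc_in_strip_above_semicircle a b x0); assumption).
  assert (H4 : 4 * R ^ 2 <= Y ^ 2) by nra.
  unfold Y in H4; rewrite HR2 in H4.
  apply Rmult_le_reg_r with (y0 ^ 2); [apply pow_lt; lra | lra].
Qed.

Lemma incircle_bound a b c o C : ideal_triangle a b c -> inH o -> 1 <= C ->
  circle_in a b c o C -> 4 * (C ^ 2 - 1) <= C ^ 2.
Proof.
  intros Htri; revert o; revert a b c Htri.
  apply (ideal_triangle_wlog (fun a b c => forall o, inH o -> 1 <= C ->
           circle_in a b c o C -> 4 * (C ^ 2 - 1) <= C ^ 2)).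
  - intros a b c H o Ho HC Hin; apply (H o Ho HC).
    apply (circle_in_sub b a c); [intro; apply triangle_swap | exact Hin].
  - intros a b c H o Ho HC Hin; apply (H o Ho HC).
    apply (circle_in_sub b c a); [intro; apply triangle_rot | exact Hin].
  - intros a b Hab o; apply incircle_bound_std, Hab.
  - intros a b c Habc o Ho HC Hin.
    destruct (finite_vertices_mobius a b c Habc) as (a' & b' & Hab' & -> & ->).
    pose proof (mobius_inv_inH c o Ho) as Ho'.
    apply (incircle_bound_std a' b' (mobius_inv c o)); [lra | exact Ho' | exact HC |].
    intros w Hw HwC; apply (triangle_mobius c); [lra | lra | exact Hw |].
    apply Hin; [apply mobius_inH, Hw |].
    rewrite <- (mobius_invK c o Ho), cosh_hdist_mobius; assumption.
Qed.

Lemma horo_arc_in_sub a b c a' b' c' v s t1 t2 :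
  (v = a \/ v = b \/ v = c -> v = a' \/ v = b' \/ v = c') ->
  (forall z, triangle a b c z -> triangle a' b' c' z) ->
  horo_arc_in a b c v s t1 t2 -> horo_arc_in a' b' c' v s t1 t2.
Proof.
  intros Hv Hsub (Hvert & Hs & Ht & Harc); split; [| split; [| split]]; auto.
Qed.

Lemma horo_arc_std a b : a < b ->
  horo_arc_in (Some a) (Some b) None None ((b - a) / 2) a b.
Proof.
  intros Hab; split; [right; right; reflexivity | split; [lra | split; [lra |]]].
  intros t Ht; apply triangle_std; [exact Hab |]; unfold inH, horo; cbn [fst snd].
  pose proof (pow2_ge_0 (t - (a + b) / 2)); repeat split; lra.
Qed.

Lemma horo_arc_of_length_2 a b c : ideal_triangle a b c ->
  exists v s t1 t2, horo_arc_in a b c v s t1 t2 /\ hlength (horo v s) t1 t2 = 2.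
Proof.
  revert a b c.
  apply ideal_triangle_wlog.
  - intros a b c (v & s & t1 & t2 & Harc & Hlen); exists v, s, t1, t2; split; [| exact Hlen].
    revert Harc; apply horo_arc_in_sub; [tauto | intro; apply triangle_swap].
  - intros a b c (v & s & t1 & t2 & Harc & Hlen); exists v, s, t1, t2; split; [| exact Hlen].
    revert Harc; apply horo_arc_in_sub; [tauto | intro; apply triangle_rot].
  - intros a b Hab; exists None, ((b - a) / 2), a, b; split; [apply horo_arc_std, Hab |].
    rewrite hlength_horo_oo; [field | ]; lra.
  - intros a b c Habc.
    destruct (finite_vertices_mobius a b c Habc) as (a' & b' & Hab' & -> & ->).
    set (s := (b' - a') / 2).
    assert (Hs : 0 < s) by (unfold s; lra).
    destruct (horo_arc_std a' b' ltac:(lra)) as (_ & _ & _ & Harc); fold s in Harc.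
    exists (Some c), (/ s), (- b' / s), (- a' / s); split.
    + split; [right; right; reflexivity | split; [apply Rinv_0_lt_compat, Hs | split]].
      * unfold Rdiv; apply Rmult_le_compat_r; [left; apply Rinv_0_lt_compat |]; lra.
      * intros u Hu; rewrite horo_mobius by exact Hs.
        apply triangle_mobius; [lra | lra | unfold inH, horo; simpl; exact Hs |].
        apply Harc.
        pose proof (Rinv_r s ltac:(lra)); unfold Rdiv in Hu; split; nra.
    + rewrite hlength_horo_finite by (apply Rinv_0_lt_compat, Hs).
      unfold s; field; lra.
Qed.

Lemma circle_above_half_height x0 Y K x y : 0 < Y -> 4 * K <= Y ^ 2 ->
  (x - x0) ^ 2 + (y - Y) ^ 2 = K -> Y / 2 <= y.
Proof.
  intros HY HK E; destruct (Rle_or_lt (Y / 2) y) as [| Hy]; [assumption | exfalso].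
  pose proof (pow2_ge_0 (x - x0)).
  assert ((Y / 2) * (Y / 2) < (Y - y) * (Y - y)) by (apply Rmult_le_0_lt_compat; lra).
  nra.
Qed.

Lemma cosh_hdist_on_small_circle o p q C : inH o -> inH p -> inH q ->
  4 * (C ^ 2 - 1) <= C ^ 2 -> cosh_hdist o p = C -> cosh_hdist o q = C ->
  cosh_hdist p q <= 3.
Proof.
  intros Ho Hp Hq HC HpC HqC.
  assert (HC1 : 1 <= C) by (rewrite <- HpC; apply cosh_hdist_ge1; assumption).
  apply cosh_hdist_euclid in HpC, HqC; try assumption.
  destruct o as [x0 y0], p as [px py], q as [qx qy]; unfold inH in *; cbn [fst snd] in *.
  set (Y := C * y0) in *; set (K := (C ^ 2 - 1) * y0 ^ 2) in *.
  assert (HY : 0 < Y) by (unfold Y; nra).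
  assert (HK : 4 * K <= Y ^ 2)
    by (unfold K, Y; replace ((C * y0) ^ 2) with (C ^ 2 * y0 ^ 2) by ring; nra).
  pose proof (circle_above_half_height _ _ _ _ _ HY HK HpC) as Hpy.
  pose proof (circle_above_half_height _ _ _ _ _ HY HK HqC) as Hqy.
  (* with m = (x0, Y): |p - q|^2 <= 2 |p - m|^2 + 2 |q - m|^2 = 4 K <= Y^2 <= 4 py qy *)
  assert (Hd : (px - qx) ^ 2 + (py - qy) ^ 2 <= 4 * py * qy).
  { pose proof (pow2_ge_0 (px + qx - 2 * x0)); pose proof (pow2_ge_0 (py + qy - 2 * Y)).
    assert (Y * Y <= (2 * py) * (2 * qy)) by (apply Rmult_le_compat; lra).
    nra. }
  unfold cosh_hdist; cbn [fst snd].
  assert (((px - qx) ^ 2 + (py - qy) ^ 2) / (2 * py * qy) <= 2).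
  { apply Rmult_le_reg_r with (2 * py * qy); [nra |].
    unfold Rdiv; rewrite Rmult_assoc, Rinv_l; nra. }
  lra.
Qed.

Theorem lemma4p2 (a b c : ideal) (o : pt) (rho : R) (p q r : pt) (h0 : R) :
  ideal_triangle a b c ->
  inscribed a b c o rho ->
  touches o rho b c p -> touches o rho c a q -> touches o rho a b r ->
  (exists v s t1 t2, horo_arc_in a b c v s t1 t2 /\ hlength (horo v s) t1 t2 = h0) ->
  (forall v s t1 t2, horo_arc_in a b c v s t1 t2 -> hlength (horo v s) t1 t2 <= h0) ->
  hdist p q < h0.
Proof.
  intros Htri (Ho & _ & Hcirc) ((Hp & Hpo) & _) ((Hq & Hqo) & _) _ _ Hmax.
  set (C := cosh_hdist o p).
  assert (HC1 : 1 <= C) by (apply cosh_hdist_ge1; assumption).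
  assert (HqC : cosh_hdist o q = C).
  { apply arcosh_inj; [apply cosh_hdist_ge1; assumption | exact HC1 |].
    unfold C; rewrite <- !hdist_cosh; congruence. }
  assert (Hin : circle_in a b c o C).
  { intros z Hz HzC; apply Hcirc; split; [exact Hz |].
    rewrite hdist_cosh, HzC; exact Hpo. }
  pose proof (incircle_bound a b c o C Htri Ho HC1 Hin) as Hbound.
  assert (Hpq : cosh_hdist p q <= 3) by (apply (cosh_hdist_on_small_circle o p q C); auto).
  destruct (horo_arc_of_length_2 a b c Htri) as (v & s & t1 & t2 & Harc & Hlen).
  pose proof (Hmax v s t1 t2 Harc) as Hh0.
  pose proof (arcosh_le _ _ (cosh_hdist_ge1 p q Hp Hq) Hpq).
  pose proof arcosh_3_lt_2.
  rewrite hdist_cosh; lra.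
Qed.
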